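(* The quadratic vector equation $Mx=a+b(x,x)$ has at least one (nonnegative) solution if and only if Condition A1 holds. Moreover, if it has a solution, then it has a minimal solution.
   Context: Inequalities between vectors/matrices are componentwise. An M-matrix is a matrix $sI-P$ with $P\geq0$ entrywise and $s\geq\rho(P)$ ($\rho$ = spectral radius). Let $M\in\mathbb R^{n\times n}$ be a nonsingular M-matrix, $a\in\mathbb R^n$ with $a\geq 0$, and $b:\mathbb R^n\times\mathbb R^n\to\mathbb R^n$ a bilinear map (not necessarily symmetric) with $b(x,y)\geq 0$ whenever $x,y\geq 0$. A solution of the quadratic vector equation $Mx=a+b(x,x)$ means a vector $x\geq 0$ satisfying it; a solution $x_\ast$ is minimal if $x_\ast\leq y$ for every solution $y$. A linear map $l:\mathbb R^n\to\mathbb R^m$ is weakly positive if $l(x)\geq 0$ and $l(x)\neq 0$ whenever $x\geq 0$, $x\neq 0$. Condition A1: there exist a weakly positive linear map $l:\mathbb R^n\to\mathbb R^m$ (for some $m$) and a vector $z\in\mathbb R^m$, $z\geq 0$, such that for every $x\geq 0$, $l(x)\leq z$ implies $l\big(M^{-1}(a+b(x,x))\big)\leq z$. *)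

From HB Require Import structures.
From mathcomp Require Import all_boot.
From Stdlib Require Import Reals.
Set Implicit Arguments. Unset Strict Implicit. Unset Printing Implicit Defensive.

Open Scope R_scope.

Lemma Rplus_0_r' : right_id 0 Rplus. Proof. intro x; apply Rplus_0_r. Qed.
Lemma Rplus_0_l' : left_id 0 Rplus. Proof. intro x; apply Rplus_0_l. Qed.
Lemma Rplus_assoc' : associative Rplus. Proof. intros x y z; symmetry; apply Rplus_assoc. Qed.
HB.instance Definition _ := Monoid.isComLaw.Build R 0 Rplus Rplus_assoc' Rplus_comm Rplus_0_l'.

Definition vec (n : nat) := 'I_n -> R.
Definition mat (n m : nat) := 'I_n -> 'I_m -> R.

Definition mulv (n m : nat) (A : mat n m) (x : vec m) : vec n :=
  fun i => \big[Rplus/0]_(j < m) (A i j * x j).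

Definition vle (n : nat) (x y : vec n) : Prop := forall i, x i <= y i.
Definition vnonneg (n : nat) (x : vec n) : Prop := forall i, 0 <= x i.
Definition mnonneg (n m : nat) (A : mat n m) : Prop := forall i j, 0 <= A i j.
Definition vnonzero (n : nat) (x : vec n) : Prop := exists i, x i <> 0.

Definition idm (n : nat) : mat n n := fun i j => if i == j then 1 else 0.

Definition is_linear (n m : nat) (f : vec n -> vec m) : Prop :=
  (forall x y i, f (fun k => x k + y k) i = f x i + f y i) /\
  (forall c x i, f (fun k => c * x k) i = c * f x i).

Definition is_bilinear (n : nat) (b : vec n -> vec n -> vec n) : Prop :=
  (forall y, is_linear (fun x => b x y)) /\ (forall x, is_linear (fun y => b x y)).

(* (alpha + i beta) is a complex eigenvalue of the real matrix P, with a
   complex eigenvector u + i v (nonzero): P(u + iv) = (alpha + i beta)(u + iv). *)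
Definition complex_eigenvalue (n : nat) (P : mat n n) (alpha beta : R) : Prop :=
  exists u v : vec n, (vnonzero u \/ vnonzero v) /\
    (forall i, mulv P u i = alpha * u i - beta * v i) /\
    (forall i, mulv P v i = beta * u i + alpha * v i).

(* s >= rho(P): s bounds the modulus of every (complex) eigenvalue of P *)
Definition spectral_radius_le (n : nat) (P : mat n n) (s : R) : Prop :=
  forall alpha beta, complex_eigenvalue P alpha beta ->
    sqrt (alpha ^ 2 + beta ^ 2) <= s.

Definition is_Mmatrix (n : nat) (M : mat n n) : Prop :=
  exists (s : R) (P : mat n n), mnonneg P /\ spectral_radius_le P s /\
    (forall i j, M i j = s * @idm n i j - P i j).

Definition is_inverse (n : nat) (M N : mat n n) : Prop :=
  (forall i j, \big[Rplus/0]_(k < n) (M i k * N k j) = @idm n i j) /\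
  (forall i j, \big[Rplus/0]_(k < n) (N i k * M k j) = @idm n i j).

Definition is_solution (n : nat) (M : mat n n) (a : vec n)
    (b : vec n -> vec n -> vec n) (x : vec n) : Prop :=
  vnonneg x /\ forall i, mulv M x i = a i + b x x i.

Definition is_minimal_solution (n : nat) (M : mat n n) (a : vec n)
    (b : vec n -> vec n -> vec n) (x : vec n) : Prop :=
  is_solution M a b x /\ forall y, is_solution M a b y -> vle x y.

Definition weakly_positive (n m : nat) (l : vec n -> vec m) : Prop :=
  is_linear l /\ forall x, vnonneg x -> vnonzero x -> vnonneg (l x) /\ vnonzero (l x).

Definition conditionA1 (n : nat) (Minv : mat n n) (a : vec n)
    (b : vec n -> vec n -> vec n) : Prop :=
  exists (m : nat) (l : vec n -> vec m) (z : vec m),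
    weakly_positive l /\ vnonneg z /\
    forall x : vec n, vnonneg x -> vle (l x) z ->
      vle (l (mulv Minv (fun i => a i + b x x i))) z.

(* With G(x) = M^-1 (a + b(x,x)), the solutions are the nonnegative fixed points
   of G, and G is monotone on the nonnegative orthant as soon as M^-1 >= 0.
   A solution x* yields Condition A1 with l = id and z = x*.  Conversely, under
   A1 the iterates G^k(0) increase and stay in the G-invariant region
   l(x) <= z, which weak positivity of l makes bounded; their limit is a fixed
   point lying below every solution, hence the minimal solution.

   M^-1 >= 0 for M = sI - P is proved by continuation in t: tI - P is
   inverse-positive for large t (a vector w > 0 with (tI - P) w > 0 certifies
   it), inverse-positivity spreads from t to a neighbourhood of any t0 >= s
   since t0 I - P is invertible (t0 > s is not an eigenvalue of P, and t0 = s
   by hypothesis), and an infimum argument carries it down to t = s. *)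

From mathcomp Require Import all_boot all_order all_algebra.
From mathcomp Require Import Rstruct.
From Stdlib Require Import Reals Lra Classical ClassicalEpsilon FunctionalExtensionality.

Set Implicit Arguments.
Unset Strict Implicit.
Unset Printing Implicit Defensive.

Open Scope R_scope.

Section RealSums.
Variable n : nat.
Implicit Types F G : 'I_n -> R.

Lemma sumR_ge0 F : (forall j, 0 <= F j) -> 0 <= \big[Rplus/0]_(j < n) F j.
Proof. by move=> h; apply: (big_ind (fun x => 0 <= x)) => //; [lra | move=> x y; lra]. Qed.

Lemma leR_sum F G : (forall j, F j <= G j) ->
  \big[Rplus/0]_(j < n) F j <= \big[Rplus/0]_(j < n) G j.
Proof. by move=> h; apply: (big_ind2 (fun x y => x <= y)) => //; [lra | move=> ????; lra]. Qed.

Lemma sumR_scale c F :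
  \big[Rplus/0]_(j < n) (c * F j) = c * \big[Rplus/0]_(j < n) F j.
Proof. by apply: (big_rec2 (fun y1 y2 => y1 = c * y2)); [ring | move=> i y1 y2 _ ->; ring]. Qed.

Lemma sumR_abs_le F :
  Rabs (\big[Rplus/0]_(j < n) F j) <= \big[Rplus/0]_(j < n) Rabs (F j).
Proof.
apply: (big_ind2 (fun x y => Rabs x <= y)) => [|x1 x2 y1 y2 h1 h2|i _]; last lra.
- by rewrite Rabs_R0; lra.
- by have := Rabs_triang x1 y1; lra.
Qed.

Lemma sumR_ge_term F i : (forall j, 0 <= F j) -> F i <= \big[Rplus/0]_(j < n) F j.
Proof.
move=> h; rewrite (bigD1 i) //= -{1}(Rplus_0_r (F i)); apply: Rplus_le_compat_l.
by apply: (big_ind (fun x => 0 <= x)) => //; [lra | move=> x y; lra].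
Qed.

Lemma sumR_idm i (x : vec n) : \big[Rplus/0]_(j < n) (idm i j * x j) = x i.
Proof.
rewrite (bigD1 i) //= big1 /idm ?eqxx; first ring.
by move=> j hj; rewrite eq_sym (negbTE hj); ring.
Qed.

End RealSums.

Section MatrixVector.
Variables n m : nat.
Implicit Types (A : mat n m) (x y : vec m).

Lemma mulv_ext A x y i : (forall j, x j = y j) -> mulv A x i = mulv A y i.
Proof. by move=> h; apply: eq_bigr => j _; rewrite h. Qed.

Lemma mulvD A x y i : mulv A (fun k => x k + y k) i = mulv A x i + mulv A y i.
Proof. by rewrite /mulv -big_split; apply: eq_bigr => j _ /=; ring. Qed.

Lemma mulvZ A c x i : mulv A (fun k => c * x k) i = c * mulv A x i.
Proof. by rewrite /mulv -sumR_scale; apply: eq_bigr => j _; ring. Qed.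

Lemma mulvB A x y i : mulv A (fun k => x k - y k) i = mulv A x i - mulv A y i.
Proof.
have -> : mulv A x i - mulv A y i = mulv A x i + mulv A (fun k => -1 * y k) i.
  by rewrite mulvZ; ring.
by rewrite -mulvD; apply: mulv_ext => j; ring.
Qed.

Lemma mulv0 A i : mulv A (fun _ => 0) i = 0.
Proof. by rewrite /mulv big1 // => j _; ring. Qed.

Lemma mulv_ge0 A x : mnonneg A -> vnonneg x -> vnonneg (mulv A x).
Proof. by move=> hA hx i; apply: sumR_ge0 => j; apply: Rmult_le_pos. Qed.

Lemma mulv_le A x y : mnonneg A -> vle x y -> vle (mulv A x) (mulv A y).
Proof. by move=> hA hxy i; apply: leR_sum => j; apply: Rmult_le_compat_l. Qed.

End MatrixVector.

Lemma mulvK n (A B : mat n n) :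
  (forall i j, \big[Rplus/0]_(k < n) (A i k * B k j) = idm i j) ->
  forall x i, mulv A (mulv B x) i = x i.
Proof.
move=> hAB x i; rewrite /mulv.
under eq_bigr => k _ do rewrite -sumR_scale.
rewrite exchange_big /= -(sumR_idm i x); apply: eq_bigr => j _.
by rewrite -hAB Rmult_comm -sumR_scale; apply: eq_bigr => k _; ring.
Qed.

Definition trivial_kernel n (A : mat n n) : Prop :=
  forall x : vec n, (forall i, mulv A x i = 0) -> forall i, x i = 0.

Section TrivialKernel.
Local Open Scope ring_scope.

Lemma mulv_inverse_of_trivial_kernel n (A : mat n n) : trivial_kernel A ->
  exists N : mat n n, (forall y i, mulv A (mulv N y) i = y i) /\
                      (forall x i, mulv N (mulv A x) i = x i).
Proof.
(* [mulv A x] is the row vector [x] times the transpose [B] of [A]. *)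
move=> hker.
pose rv (x : vec n) : 'rV[R]_n := \row_j x j.
pose mat_of (C : 'M[R]_n) : mat n n := fun i k => C k i.
have rv_mulv C x : rv (mulv (mat_of C) x) = rv x *m C.
  apply/matrixP => i j; rewrite !mxE /mulv; apply: eq_bigr => k _.
  by rewrite mxE GRing.mulrC.
have rvK (u : 'rV[R]_n) : rv (fun j => u ord0 j) = u.
  by apply/matrixP => i j; rewrite /rv mxE (ord1 i).
pose B : 'M[R]_n := \matrix_(i, j) A j i.
have eA : A = mat_of B by do 2 apply: functional_extensionality => ?; rewrite /mat_of mxE.
have B_unit : B \in unitmx.
  rewrite -row_free_unit -kermx_eq0; apply/eqP/matrixP => k j.
  have ker0 : row k (kermx B) *m B = 0 by rewrite -row_mul mulmx_ker row0.
  have := hker (fun i => row k (kermx B) ord0 i) _ j; rewrite !mxE => -> // i.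
  have := congr1 (fun u : 'rV_n => u ord0 i) (rv_mulv B (fun i => row k (kermx B) ord0 i)).
  by rewrite rvK ker0 -eA !mxE.
exists (mat_of (invmx B)); rewrite eA; split=> x i.
- have := congr1 (fun u : 'rV_n => u ord0 i) (rv_mulv B (mulv (mat_of (invmx B)) x)).
  by rewrite [rv (mulv _ x)]rv_mulv mulmxKV // /rv !mxE.
- have := congr1 (fun u : 'rV_n => u ord0 i) (rv_mulv (invmx B) (mulv (mat_of B) x)).
  by rewrite [rv (mulv _ x)]rv_mulv mulmxK // /rv !mxE.
Qed.

End TrivialKernel.

Lemma exists_argmax n (f : 'I_n -> R) (i0 : 'I_n) : exists k, forall i, f i <= f k.
Proof.
case: (@Order.TotalTheory.arg_maxP _ _ _ i0 xpredT f isT) => k _ k_max.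
by exists k => i; apply/RleP; apply: k_max.
Qed.

Definition mat_norm n m (N : mat n m) : R :=
  \big[Rplus/0]_(i < n) \big[Rplus/0]_(j < m) Rabs (N i j).

Lemma mat_norm_ge0 n m (N : mat n m) : 0 <= mat_norm N.
Proof. by apply: sumR_ge0 => i; apply: sumR_ge0 => j; apply: Rabs_pos. Qed.

Lemma mulv_abs_le n m (N : mat n m) (y : vec m) Y : 0 <= Y ->
  (forall j, Rabs (y j) <= Y) -> forall i, Rabs (mulv N y i) <= mat_norm N * Y.
Proof.
move=> Y_ge0 y_le i.
apply: (Rle_trans _ _ _ (sumR_abs_le _)).
apply: (Rle_trans _ (\big[Rplus/0]_(j < m) (Y * Rabs (N i j)))).
  apply: leR_sum => j; rewrite Rabs_mult Rmult_comm.
  by apply: Rmult_le_compat_r; [apply: Rabs_pos | apply: y_le].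
rewrite sumR_scale Rmult_comm; apply: Rmult_le_compat_r => //.
by apply: (sumR_ge_term (F := fun i => \big[Rplus/0]_(j < m) Rabs (N i j))) => k;
  apply: sumR_ge0 => j; apply: Rabs_pos.
Qed.

Lemma perturbed_solution_bound n (A N : mat n n) (w : vec n) d :
  (forall x i, mulv N (mulv A x) i = x i) ->
  0 <= d -> (1 + mat_norm N) * d <= / 4 ->
  (forall i, mulv A w i = 1 - d * w i) ->
  forall i, Rabs (w i) <= 2 * (1 + mat_norm N).
Proof.
move=> NK d_ge0 d_small Aw_eq i.
have [k k_max] := exists_argmax (fun i => Rabs (w i)) i.
set W := Rabs (w k) in k_max.
have W_ge0 : 0 <= W by apply: Rabs_pos.
have rhs_le j : Rabs (1 - d * w j) <= 1 + d * W.
  apply: Rle_trans (Rabs_triang _ _) _; rewrite Rabs_Ropp Rabs_mult Rabs_R1 (Rabs_pos_eq d) //.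
  by have := k_max j; simpl; nra.
have W_le : W <= mat_norm N * (1 + d * W).
  rewrite {1}/W -(NK w k) (mulv_ext _ _ Aw_eq).
  by apply: (mulv_abs_le N _ rhs_le); nra.
have := mat_norm_ge0 N; have := k_max i; simpl; nra.
Qed.

Lemma real_continuation_down (Q : R -> Prop) s :
  (exists T, forall t, T <= t -> Q t) ->
  (forall t0, s <= t0 -> exists d, 0 < d /\
     forall t, t0 <= t -> t < t0 + d -> Q t ->
     forall t', t0 - d <= t' -> t' <= t -> Q t') ->
  Q s.
Proof.
move=> [T Q_large] Q_local.
pose good u := s <= u /\ forall t, u <= t -> Q t.
have [m [m_ub m_lub]] : {m | is_lub (fun u => good (- u)) m}.
  apply: completeness.
    by exists (- s) => u [s_le _]; lra.
  exists (- Rmax s T); rewrite /good Ropp_involutive; split; first exact: Rmax_l.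
  by move=> t t_ge; apply: Q_large; have := Rmax_r s T; lra.
have s_le_inf : s <= - m.
  suff : m <= - s by lra.
  by apply: m_lub => u [s_le _]; lra.
have inf_le u : good u -> - m <= u.
  move=> good_u; suff : - u <= m by lra.
  by apply: m_ub; rewrite /good Ropp_involutive.
have inf_approx eps : 0 < eps -> exists u, good u /\ u < - m + eps.
  move=> eps_gt0; apply: NNPP => no_u.
  suff : m <= m - eps by lra.
  apply: m_lub => u good_u; apply: Rnot_lt_le => lt_u; apply: no_u.
  by exists (- u); split => //; lra.
have [d [d_gt0 Q_near]] := Q_local _ s_le_inf.
have [t [[s_le_t Q_above] t_lt]] := inf_approx _ d_gt0.
have inf_le_t := inf_le t (conj s_le_t Q_above).
have Q_down := Q_near t inf_le_t t_lt (Q_above t (Rle_refl t)).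
case: (Rle_lt_dec (- m - d) s) => [low | high]; first by apply: Q_down; lra.
suff : - m <= - m - d by lra.
apply: inf_le; split; first lra.
by move=> t' t'_ge; case: (Rle_lt_dec t' t) => t't; [apply: Q_down | apply: Q_above]; lra.
Qed.

Definition inverse_positive n (A : mat n n) : Prop :=
  forall x, vnonneg (mulv A x) -> vnonneg x.

Section ShiftedMatrix.
Variables (n : nat) (P : mat n n).
Hypothesis P_ge0 : mnonneg P.

Definition shift_mat (t : R) : mat n n := fun i j => t * idm i j - P i j.

Lemma mulv_shift t x i : mulv (shift_mat t) x i = t * x i - mulv P x i.
Proof.
have -> : mulv (shift_mat t) x i =
    \big[Rplus/0]_(j < n) (t * (idm i j * x j) + -1 * (P i j * x j)).
  by apply: eq_bigr => j _; rewrite /shift_mat; ring.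
by rewrite big_split /= !sumR_scale sumR_idm /mulv; ring.
Qed.

Lemma inverse_positive_of_pos_supervector t (w : vec n) :
  (forall i, 0 < w i) -> (forall i, 0 < mulv (shift_mat t) w i) ->
  inverse_positive (shift_mat t).
Proof.
move=> w_gt0 Mw_gt0 x Mx_ge0 i0; apply: Rnot_lt_le => x_i0_lt0.
have [k k_max] := exists_argmax (fun i => - x i / w i) i0.
set c := - x k / w k in k_max.
have c_gt0 : 0 < c.
  have : 0 < - x i0 / w i0 by apply: Rdiv_lt_0_compat; [lra | exact: w_gt0].
  by have := k_max i0; rewrite /=; lra.
pose z i := x i + c * w i.
have z_ge0 : vnonneg z.
  move=> i; have wi_gt0 := w_gt0 i.
  have : - x i / w i * w i <= c * w i by apply: Rmult_le_compat_r; [lra | exact: k_max].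
  have -> : - x i / w i * w i = - x i by field; lra.
  by rewrite /z; lra.
have z_k : z k = 0 by rewrite /z /c; field; have := w_gt0 k; lra.
have Mz_k : mulv (shift_mat t) z k = mulv (shift_mat t) x k + c * mulv (shift_mat t) w k.
  by rewrite -mulvZ -mulvD.
have Mz_k_le0 : mulv (shift_mat t) z k <= 0.
  by rewrite mulv_shift z_k; have := mulv_ge0 P_ge0 z_ge0 k; lra.
have := Rmult_lt_0_compat _ _ c_gt0 (Mw_gt0 k); have := Mx_ge0 k; lra.
Qed.

Lemma inverse_positive_of_row_sums_lt t :
  (forall i, mulv P (fun _ => 1) i < t) -> inverse_positive (shift_mat t).
Proof.
move=> rows_lt; apply: (@inverse_positive_of_pos_supervector _ (fun _ => 1)) => i.
- lra.
- by rewrite mulv_shift; have := rows_lt i; lra.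
Qed.

(* w = (tI - P)^-1 1 is positive, and the left inverse N0 bounds it by 2 C
   uniformly for t near t0; so w still certifies inverse positivity at t'. *)
Lemma inverse_positive_local t0 t t' (N0 : mat n n) (w : vec n) :
  (forall x i, mulv N0 (mulv (shift_mat t0) x) i = x i) ->
  t0 <= t -> t - t0 <= / (8 * (1 + mat_norm N0)) ->
  t0 - t' <= / (8 * (1 + mat_norm N0)) -> t' <= t ->
  (forall i, mulv (shift_mat t) w i = 1) -> inverse_positive (shift_mat t) ->
  inverse_positive (shift_mat t').
Proof.
move=> N0K t0_le_t t_near t'_near t'_le_t Mw_eq1 pos_t.
set C := 1 + mat_norm N0 in t_near t'_near.
have C_ge1 : 1 <= C by have := mat_norm_ge0 N0; rewrite /C; lra.
have scaled d : d <= / (8 * C) -> 8 * C * d <= 1.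
  by move=> d_le; rewrite -(Rinv_r (8 * C)); [apply: Rmult_le_compat_l | ]; lra.
have t_close : 8 * C * (t - t0) <= 1 by apply: scaled.
have t'_close : 8 * C * (t0 - t') <= 1 by apply: scaled.
have w_ge0 : vnonneg w by apply: pos_t => i; rewrite Mw_eq1; lra.
have w_gt0 i : 0 < w i.
  have := Mw_eq1 i; rewrite mulv_shift; have := mulv_ge0 P_ge0 w_ge0 i.
  by case: (Rle_lt_or_eq_dec _ _ (w_ge0 i)) => // <-; lra.
have w_le i : w i <= 2 * C.
  apply: Rle_trans (Rle_abs _) _; apply: (perturbed_solution_bound (d := t - t0) N0K).
  - lra.
  - rewrite -/C; lra.
  - by move=> j; rewrite !mulv_shift -(Mw_eq1 j) mulv_shift; ring.
apply: (@inverse_positive_of_pos_supervector t' w) => // i.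
have -> : mulv (shift_mat t') w i = 1 - (t - t') * w i.
  by rewrite -(Mw_eq1 i) !mulv_shift; ring.
have := w_le i; have := w_gt0 i; nra.
Qed.

Lemma inverse_positive_shift s :
  (forall t, s <= t -> trivial_kernel (shift_mat t)) -> inverse_positive (shift_mat s).
Proof.
move=> ker0; apply: (real_continuation_down (Q := fun t => inverse_positive (shift_mat t))).
  exists (1 + \big[Rplus/0]_(i < n) mulv P (fun _ => 1) i) => t t_large.
  apply: inverse_positive_of_row_sums_lt => i.
  suff : mulv P (fun _ => 1) i <= \big[Rplus/0]_(i < n) mulv P (fun _ => 1) i by lra.
  by apply: (sumR_ge_term (F := fun i => mulv P (fun _ => 1) i)) => j; apply: mulv_ge0 => // k; lra.
move=> t0 s_le_t0.
have [N0 [_ N0K]] := mulv_inverse_of_trivial_kernel (ker0 t0 s_le_t0).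
have C_gt0 : 0 < 8 * (1 + mat_norm N0) by have := mat_norm_ge0 N0; lra.
exists (/ (8 * (1 + mat_norm N0))); split; first exact: Rinv_0_lt_compat.
move=> t t0_le_t t_near Q_t t' t'_near t'_le_t.
have [N1 [N1K _]] := mulv_inverse_of_trivial_kernel (ker0 t (Rle_trans _ _ _ s_le_t0 t0_le_t)).
have Mw_eq1 i : mulv (shift_mat t) (mulv N1 (fun _ => 1)) i = 1 by apply: N1K.
by apply: (@inverse_positive_local t0 t t' N0 (mulv N1 (fun _ => 1))) => //; lra.
Qed.

End ShiftedMatrix.

Lemma shift_trivial_kernel_gt n (P : mat n n) s t :
  spectral_radius_le P s -> s < t -> trivial_kernel (shift_mat P t).
Proof.
move=> spec s_lt_t x Mx0 i; apply: NNPP => xi_neq0.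
have ev : complex_eigenvalue P t 0.
  exists x, (fun _ => 0); split; first by left; exists i.
  split=> j; last by rewrite mulv0; ring.
  by have := Mx0 j; rewrite mulv_shift; lra.
have := spec _ _ ev.
rewrite (_ : t ^ 2 + 0 ^ 2 = Rsqr t); last by rewrite /Rsqr; ring.
by rewrite sqrt_Rsqr_abs; have := Rle_abs t; lra.
Qed.

Lemma trivial_kernel_of_left_inverse n (A N : mat n n) :
  (forall i j, \big[Rplus/0]_(k < n) (N i k * A k j) = idm i j) -> trivial_kernel A.
Proof. by move=> NA x Ax0 i; rewrite -(mulvK NA x i) (mulv_ext _ _ Ax0) mulv0. Qed.

Lemma inverse_nonneg_of_inverse_positive n (A N : mat n n) : inverse_positive A ->
  (forall i j, \big[Rplus/0]_(k < n) (A i k * N k j) = idm i j) -> mnonneg N.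
Proof.
move=> posA AN i j; apply: (posA (fun k => N k j)) => k.
by rewrite /mulv AN /idm; case: eqP => _; lra.
Qed.

Lemma Mmatrix_inverse_nonneg n (M Minv : mat n n) :
  is_Mmatrix M -> is_inverse M Minv -> mnonneg Minv.
Proof.
move=> [s [P [P_ge0 [spec M_eq]]]] [MMinv MinvM].
have eM : M = shift_mat P s by do 2 apply: functional_extensionality => ?; apply: M_eq.
subst M; apply: inverse_nonneg_of_inverse_positive MMinv.
apply: inverse_positive_shift => // t s_le_t.
case: (Rle_lt_or_eq_dec _ _ s_le_t) => [s_lt_t | <-].
- exact: (shift_trivial_kernel_gt spec s_lt_t).
- exact: (trivial_kernel_of_left_inverse MinvM).
Qed.

Lemma Un_cv_le_ub (u : nat -> R) l c : Un_cv u l -> (forall k, u k <= c) -> l <= c.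
Proof.
move=> cv u_le; apply: (Rle_cv_lim u_le cv) => eps eps_gt0.
by exists 0%nat => k _; rewrite /Rdist Rminus_diag_eq // Rabs_R0.
Qed.

Lemma Un_cv_uniform n (u : nat -> vec n) (l : vec n) :
  (forall i, Un_cv (fun k => u k i) (l i)) ->
  forall eps, 0 < eps -> exists K, forall i, Rabs (u K i - l i) < eps.
Proof.
move=> cv eps eps_gt0.
have [N N_spec] := choice (fun i N => forall k, (k >= N)%coq_nat -> Rdist (u k i) (l i) < eps)
  (fun i => cv i eps eps_gt0).
by exists (\max_(i < n) N i)%N => i; apply: N_spec; apply/leP; apply: leq_bigmax.
Qed.

Section LinearMaps.
Variables (n m : nat) (f : vec n -> vec m).
Hypothesis f_lin : is_linear f.

Lemma linear_decomp (x u : vec n) i : f x i = f (fun k => x k - u k) i + f u i.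
Proof. by rewrite -(proj1 f_lin); congr (f _ i); apply: functional_extensionality => k; ring. Qed.

Lemma linear_zero i : f (fun _ => 0) i = 0.
Proof.
have := proj2 f_lin 0 (fun _ => 0) i.
have -> : (fun k : 'I_n => 0 * (fun _ : 'I_n => 0) k) = (fun _ => 0).
  by apply: functional_extensionality => k; ring.
by move=> ->; ring.
Qed.

End LinearMaps.

Lemma weakly_positive_nonneg n m (l : vec n -> vec m) :
  weakly_positive l -> forall x, vnonneg x -> vnonneg (l x).
Proof.
move=> [l_lin l_pos] x x_ge0.
case: (classic (vnonzero x)) => [x_nz | x_z]; first exact: (l_pos x x_ge0 x_nz).1.
have -> : x = (fun _ => 0).
  by apply: functional_extensionality => k; apply: NNPP => xk_nz; apply: x_z; exists k.
by move=> i; rewrite linear_zero //; lra.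
Qed.

Lemma weakly_positive_bounded n m (l : vec n -> vec m) (z : vec m) : weakly_positive l ->
  forall i, exists B, forall x, vnonneg x -> vle (l x) z -> x i <= B.
Proof.
move=> l_wpos i; have [l_lin l_pos] := l_wpos.
pose e k := if k == i then 1 else 0.
have e_ge0 : vnonneg e by move=> k; rewrite /e; case: eqP => _; lra.
have e_nz : vnonzero e by exists i; rewrite /e eqxx; lra.
have [le_ge0 [j le_j_nz]] := l_pos e e_ge0 e_nz.
have le_j_gt0 : 0 < l e j by have := le_ge0 j; lra.
exists (z j / l e j) => x x_ge0 lx_le.
have xi_le : x i * l e j <= l x j.
  rewrite (linear_decomp l_lin x (fun k => x i * e k) j) (proj2 l_lin).
  suff : 0 <= l (fun k => x k - x i * e k) j by lra.
  apply: (weakly_positive_nonneg l_wpos) => k.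
  by rewrite /e; case: eqP => [->|_]; have := x_ge0 k; lra.
apply: (Rmult_le_reg_r (l e j)) => //.
by rewrite /Rdiv Rmult_assoc Rinv_l; have := lx_le j; lra.
Qed.

Section BilinearMaps.
Variables (n : nat) (b : vec n -> vec n -> vec n).
Hypotheses (b_bilin : is_bilinear b)
  (b_ge0 : forall x y, vnonneg x -> vnonneg y -> vnonneg (b x y)).

Lemma bilinear_le x x' y y' :
  vnonneg x -> vle x x' -> vnonneg y -> vle y y' -> vle (b x y) (b x' y').
Proof.
move=> x_ge0 x_le y_ge0 y_le i; have [b_lin1 b_lin2] := b_bilin.
rewrite (linear_decomp (b_lin1 y') x' x i) (linear_decomp (b_lin2 x) y' y i).
have : 0 <= b (fun k => x' k - x k) y' i.
  by apply: b_ge0 => k; have := x_le k; have := y_ge0 k; have := y_le k; lra.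
have : 0 <= b x (fun k => y' k - y k) i by apply: b_ge0 => // k; have := y_le k; lra.
lra.
Qed.

Lemma bilinear_increment_le x u eps :
  vnonneg u -> vle u x -> (forall j, x j - u j <= eps) ->
  forall i, b x x i - b u u i <= eps * (b (fun _ => 1) x i + b x (fun _ => 1) i).
Proof.
move=> u_ge0 u_le_x near i; have [b_lin1 b_lin2] := b_bilin.
have x_ge0 : vnonneg x by move=> k; have := u_ge0 k; have := u_le_x k; lra.
have diff_ge0 : vnonneg (fun k => x k - u k) by move=> k; have := u_le_x k; lra.
have diff_le : vle (fun k => x k - u k) (fun k => eps * (fun _ => 1) k).
  by move=> k /=; have := near k; lra.
have := bilinear_le diff_ge0 diff_le x_ge0 (fun k => Rle_refl (x k)) i.
have := bilinear_le u_ge0 u_le_x diff_ge0 diff_le i.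
rewrite (proj2 (b_lin1 x)) (proj2 (b_lin2 x)).
rewrite (linear_decomp (b_lin1 x) x u i) (linear_decomp (b_lin2 u) x u i).
lra.
Qed.

End BilinearMaps.

Section QuadraticVectorEquation.
Variables (n : nat) (M Minv : mat n n) (a : vec n) (b : vec n -> vec n -> vec n).
Hypotheses (hMinv : is_inverse M Minv) (Minv_ge0 : mnonneg Minv) (a_ge0 : vnonneg a)
  (b_bilin : is_bilinear b)
  (b_ge0 : forall x y, vnonneg x -> vnonneg y -> vnonneg (b x y)).

Definition qve_map (x : vec n) : vec n := mulv Minv (fun i => a i + b x x i).

Definition qve_iter (k : nat) : vec n := iter k qve_map (fun _ => 0).

Lemma qve_map_ge0 x : vnonneg x -> vnonneg (qve_map x).
Proof.
by move=> x_ge0; apply: mulv_ge0 => // i; have := a_ge0 i; have := b_ge0 x_ge0 x_ge0 i; lra.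
Qed.

Lemma qve_map_le x y : vnonneg x -> vle x y -> vle (qve_map x) (qve_map y).
Proof.
move=> x_ge0 x_le_y; apply: mulv_le => // i.
by have := bilinear_le b_bilin b_ge0 x_ge0 x_le_y x_ge0 x_le_y i; lra.
Qed.

Lemma solution_fixed_point x :
  is_solution M a b x <-> vnonneg x /\ forall i, qve_map x i = x i.
Proof.
have [MMinv MinvM] := hMinv.
split=> [[x_ge0 x_eq] | [x_ge0 x_fix]]; split=> // i.
- by rewrite -(mulvK MinvM x i); apply: mulv_ext => j; rewrite x_eq.
- rewrite -(mulvK MMinv (fun j => a j + b x x j) i).
  by apply: mulv_ext => j; rewrite -[LHS]x_fix.
Qed.

Lemma qve_iter_ge0 k : vnonneg (qve_iter k).
Proof. by elim: k => [|k IH] i /=; [lra | apply: qve_map_ge0]. Qed.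

Lemma qve_iter_incr k : vle (qve_iter k) (qve_iter k.+1).
Proof.
elim: k => [|k IH] i /=; first by apply: qve_map_ge0 => j; lra.
exact: qve_map_le (qve_iter_ge0 k) IH i.
Qed.

Lemma qve_iter_le_solution y k : is_solution M a b y -> vle (qve_iter k) y.
Proof.
move=> /solution_fixed_point [y_ge0 y_fix]; elim: k => [|k IH] i /=; first exact: y_ge0.
by rewrite -y_fix; apply: qve_map_le (qve_iter_ge0 k) IH i.
Qed.

Lemma qve_map_increment_le x u eps :
  vnonneg u -> vle u x -> (forall j, x j - u j <= eps) ->
  forall i, qve_map x i - qve_map u i <=
    eps * mulv Minv (fun j => b (fun _ => 1) x j + b x (fun _ => 1) j) i.
Proof.
move=> u_ge0 u_le_x near i.
rewrite /qve_map -mulvB -mulvZ; apply: mulv_le => // j /=.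
by have := bilinear_increment_le b_bilin b_ge0 u_ge0 u_le_x near j; lra.
Qed.

Lemma qve_iter_limit_solution x :
  (forall i, Un_cv (fun k => qve_iter k i) (x i)) -> is_solution M a b x.
Proof.
move=> cv; apply/solution_fixed_point.
have iter_le k i : qve_iter k i <= x i.
  exact: growing_ineq (fun k => qve_iter_incr k i) (cv i) k.
have x_ge0 : vnonneg x by move=> i; apply: iter_le 0%nat i.
split=> // i; apply: Rle_antisym.
- apply: Rle_plus_epsilon => del del_gt0.
  set V := mulv Minv (fun j => b (fun _ => 1) x j + b x (fun _ => 1) j).
  have one_ge0 : vnonneg (fun _ : 'I_n => 1) by move=> k; apply: Rle_0_1.
  have V_ge0 : 0 <= V i.
    apply: mulv_ge0 => // j /=.
    by have := b_ge0 one_ge0 x_ge0 j; have := b_ge0 x_ge0 one_ge0 j; lra.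
  have eps_gt0 : 0 < del / (V i + 1) by apply: Rdiv_lt_0_compat; lra.
  have [K K_near] := Un_cv_uniform cv eps_gt0.
  have near j : x j - qve_iter K j <= del / (V i + 1).
    by have := Rle_abs (- (qve_iter K j - x j)); rewrite Rabs_Ropp; have := K_near j; lra.
  have := qve_map_increment_le (qve_iter_ge0 K) (iter_le K) near i.
  have : del / (V i + 1) * V i <= del.
    by apply: (Rmult_le_reg_r (V i + 1)); [lra | field_simplify; nra].
  have := iter_le K.+1 i; rewrite /= -/V; lra.
- apply: (Un_cv_le_ub (cv i)) => -[|k] /=; first exact: qve_map_ge0.
  by apply: qve_map_le (qve_iter_ge0 k) (iter_le k) i.
Qed.

Lemma minimal_solution_of_bounded_iter :
  (forall i, exists B, forall k, qve_iter k i <= B) -> exists x, is_minimal_solution M a b x.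
Proof.
move=> bounded.
have cv i : {l | Un_cv (fun k => qve_iter k i) l}.
  apply: growing_cv => [k | ]; first exact: qve_iter_incr.
  by have [B B_ub] := bounded i; exists B => _ [k ->].
exists (fun i => sval (cv i)); split.
  by apply: qve_iter_limit_solution => i; apply: svalP.
by move=> y y_sol i; apply: (Un_cv_le_ub (svalP (cv i))) => k; apply: qve_iter_le_solution.
Qed.

Lemma qve_iter_bounded_of_conditionA1 :
  conditionA1 Minv a b -> forall i, exists B, forall k, qve_iter k i <= B.
Proof.
move=> [m [l [z [l_wpos [z_ge0 l_inv]]]]] i.
have [B B_ub] := weakly_positive_bounded z l_wpos i.
exists B => k; apply: B_ub (qve_iter_ge0 k) _.
elim: k => [|k IH] j /=; first by rewrite (linear_zero l_wpos.1).
exact: l_inv (qve_iter_ge0 k) IH j.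
Qed.

Lemma conditionA1_of_solution x : is_solution M a b x -> conditionA1 Minv a b.
Proof.
move=> /solution_fixed_point [x_ge0 x_fix].
exists n, (fun y => y), x; split; last split => //.
  by split; [split | move=> y y_ge0 y_nz].
by move=> y y_ge0 y_le i; rewrite -x_fix; apply: qve_map_le.
Qed.

End QuadraticVectorEquation.

Theorem mainTheorem4 (n : nat) (M Minv : mat n n) (a : vec n)
    (b : vec n -> vec n -> vec n)
    (hM : is_Mmatrix M) (hMinv : is_inverse M Minv)
    (ha : vnonneg a) (hb : is_bilinear b)
    (hbpos : forall x y, vnonneg x -> vnonneg y -> vnonneg (b x y)) :
  ((exists x, is_solution M a b x) <-> conditionA1 Minv a b) /\
  ((exists x, is_solution M a b x) -> exists x, is_minimal_solution M a b x).
Proof.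
have Minv_ge0 := Mmatrix_inverse_nonneg hM hMinv.
have A1_of_sol x : is_solution M a b x -> conditionA1 Minv a b.
  exact: conditionA1_of_solution hMinv Minv_ge0 hb hbpos x.
have min_of_A1 : conditionA1 Minv a b -> exists x, is_minimal_solution M a b x.
  move=> A1; apply: (minimal_solution_of_bounded_iter hMinv Minv_ge0 ha hb hbpos).
  exact: qve_iter_bounded_of_conditionA1 Minv_ge0 ha hbpos A1.
split; first split.
- by move=> [x /A1_of_sol].
- by move=> /min_of_A1 [x [x_sol _]]; exists x.
- by move=> [x /A1_of_sol /min_of_A1].
Qed.
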